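(* Let $\alpha\in(1,\infty)\setminus\mathbb{N}$ and let $M_{0,\alpha}(X^n,P)=\sum_{x\in\mathcal{X}}p_x^{\alpha}I(F_x(X^n)=0)$. Then $$\sup_P E\big[(M_{0,\alpha}(X^n,P))^2\big]\le_n O\big(1/n^{2(\alpha-1)}\big),$$ the supremum being over all discrete distributions $P$.
   Context: $P$ is a discrete probability distribution on a countable alphabet $\mathcal{X}$, $p_x=P(x)$, and $X^n=(X_1,\ldots,X_n)$ are i.i.d. samples from $P$. $F_x(X^n)=\sum_{i=1}^n I(X_i=x)$ is the number of occurrences of $x$ in $X^n$, and $I(\cdot)$ is the indicator. For nonnegative sequences, $a_n\le_n b_n$ means $a_n\le b_n+o(b_n)$ as $n\to\infty$. *)

From HB Require Import structures.
From mathcomp Require Import all_boot all_order all_algebra.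
From mathcomp Require Import all_classical all_reals.
From mathcomp Require Import ereal topology normedtype sequences esum exp.
Set Implicit Arguments. Unset Strict Implicit. Unset Printing Implicit Defensive.
Import Order.TTheory GRing.Theory Num.Theory.
Local Open Scope classical_set_scope.
Local Open Scope ring_scope.

(* The countable alphabet is taken to be nat (any countable alphabet embeds
   into nat; symbols outside the embedding get probability 0). *)

Definition is_distr (R : realType) (p : nat -> R) : Prop :=
  (forall x, 0 <= p x) /\ (\esum_(x in [set: nat]) (p x)%:E = 1%E).

Definition occ (n : nat) (s : n.-tuple nat) (x : nat) : nat := count_mem x s.

Definition M0 (R : realType) (alpha : R) (p : nat -> R) (n : nat)
  (s : n.-tuple nat) : \bar R :=
  \esum_(x in [set: nat]) ((p x `^ alpha) * (occ s x == 0)%:R)%:E.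

Definition seq_prob (R : realType) (p : nat -> R) (n : nat)
  (s : n.-tuple nat) : R := \prod_(i <- s) p i.

Definition EM0sq (R : realType) (alpha : R) (p : nat -> R) (n : nat) : \bar R :=
  \esum_(s in [set: n.-tuple nat])
     ((seq_prob p s)%:E * (M0 alpha p s * M0 alpha p s))%E.

(* Expanding the square, E[M^2] = sum_(x,y) p_x^a p_y^a P(F_x = F_y = 0), and
   P(F_x = F_y = 0) is (1 - p_x - p_y)^n <= (1 - p_x)^n (1 - p_y)^n for x <> y
   and (1 - p_x)^n on the diagonal.  Hence
     E[M^2] <= (sum_x p_x^a (1 - p_x)^n)^2 + sum_x p_x^(2a) (1 - p_x)^n.
   With b = a - 1, resp. b = 2(a - 1), each summand is at most p_x q^b (1 - q)^n
   for q = p_x, and q^b (1 - q)^n <= q^b exp(-nq) <= (b/n)^b because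
   t^b <= b^b exp t.  Summing against P bounds the first sum by O(n^-(a-1)) and
   the second by O(n^-2(a-1)). *)

From HB Require Import structures.
From mathcomp Require Import all_boot all_order all_algebra.
From mathcomp Require Import all_classical all_reals.
From mathcomp Require Import ereal topology normedtype sequences esum exp.
From mathcomp Require Import ring lra.
Import Order.TTheory GRing.Theory Num.Theory.
Local Open Scope classical_set_scope.
Local Open Scope ring_scope.

Section real_bounds.
Variable R : realType.

Lemma powR_le_expR (b t : R) : 0 < b -> 0 <= t -> t `^ b <= b `^ b * expR t.
Proof.
move=> b_gt0 t_ge0.
have -> : t = b * (t / b) by rewrite mulrC divfK// gt_eqF.
rewrite powRM ?divr_ge0 ?(ltW b_gt0)// ler_wpM2l ?powR_ge0//.
have le_exp : t / b <= expR (t / b).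
  by apply: le_trans (expR_ge1Dx _); rewrite lerDr.
rewrite (le_trans (ge0_ler_powR (ltW b_gt0) _ _ le_exp))//.
- by rewrite nnegrE divr_ge0// ltW.
- by rewrite nnegrE expR_ge0.
- by rewrite -expRM mulrC.
Qed.

Lemma powR_mul_expr_subr_le (b q : R) (n : nat) : 0 < b -> (0 < n)%N ->
  0 <= q -> q <= 1 -> q `^ b * (1 - q) ^+ n <= b `^ b / n%:R `^ b.
Proof.
move=> b_gt0 n_gt0 q_ge0 q_le1.
have n_pos : 0 < (n%:R : R) by rewrite ltr0n.
have nb_pos : 0 < n%:R `^ b by rewrite powR_gt0.
have le_exp : (1 - q) ^+ n <= expR (- q * n%:R).
  rewrite expRM_natr lerXn2r ?nnegrE ?subr_ge0 ?expR_ge0//.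
  by apply: le_trans (expR_ge1Dx _); rewrite lerD.
have le_nq : q `^ b * n%:R `^ b <= b `^ b * expR (q * n%:R).
  by rewrite -powRM ?(ltW n_pos)// powR_le_expR// mulr_ge0// ltW.
apply: (le_trans (ler_wpM2l (powR_ge0 _ _) le_exp)).
rewrite ler_pdivlMr// mulNr expRN -mulrA mulrC -mulrA ler_pdivrMl ?expR_gt0//.
by rewrite mulrC [X in _ <= X]mulrC.
Qed.

Lemma powR_le_self (q b : R) : 0 <= q -> q <= 1 -> 1 <= b -> q `^ b <= q.
Proof.
move=> q_ge0 q_le1 b_ge1; have [->|q_neq0] := eqVneq q 0.
  by rewrite powR0// gt_eqF// (lt_le_trans ltr01).
by rewrite ge1r_powR// lt0r q_neq0 q_ge0.
Qed.

Lemma expr_powR_mul_expr_subr_le (b q : R) (k n : nat) :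
  1 < b -> (0 < k)%N -> (0 < n)%N -> 0 <= q -> q <= 1 ->
  (q `^ b) ^+ k * (1 - q) ^+ n <=
    q * ((k%:R * (b - 1)) `^ (k%:R * (b - 1)) / n%:R `^ (k%:R * (b - 1))).
Proof.
move=> b_gt1 k_gt0 n_gt0 q_ge0 q_le1; set c := k%:R * (b - 1).
have c_gt0 : 0 < c by rewrite mulr_gt0 ?ltr0n ?subr_gt0.
have split_exp : (q `^ b) ^+ k = q ^+ k * q `^ c.
  rewrite -powR_mulrn ?powR_ge0// -powRrM -powR_mulrn//.
  rewrite -powRD; first by congr (q `^ _); rewrite /c; ring.
  by rewrite gt_eqF ?orbT// addr_gt0// ltr0n.
have qk_le : q ^+ k <= q.
  by rewrite -(prednK k_gt0) exprS ler_piMr// exprn_ile1.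
rewrite split_exp -mulrA ler_pM ?mulr_ge0 ?exprn_ge0 ?powR_ge0 ?subr_ge0//.
exact: powR_mul_expr_subr_le.
Qed.

End real_bounds.

Lemma prod_neq_count_mem (R : pzSemiRingType) (T : eqType) (x : T) (r : seq T) :
  \prod_(i <- r) ((i != x)%:R : R) = (count_mem x r == 0)%:R.
Proof.
elim: r => [|y r IHr]; first by rewrite big_nil.
by rewrite big_cons IHr /=; case: eqVneq => _; rewrite ?mul0r ?mul1r.
Qed.

Section esum_lemmas.
Context {R : realType}.
Local Open Scope ereal_scope.

Lemma esumZl {T : choiceType} (c : R) (a : T -> \bar R) :
  (0 <= c)%R -> (forall i, 0 <= a i) ->
  \esum_(i in [set: T]) (c%:E * a i) = c%:E * \esum_(i in [set: T]) a i.
Proof.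
move=> c_ge0 a_ge0; rewrite /esum -ereal_supZl//; last first.
  by apply/set0P; exists 0; exists set0; [exact: fsets_set0|rewrite fsbig_set0].
congr ereal_sup; apply/seteqP; split => x /=.
  move=> [A finA <-]; exists (\sum_(i \in A) a i); first by exists A.
  by rewrite ge0_mule_fsumr.
by move=> [_ [A finA <-] <-]; exists A => //; rewrite ge0_mule_fsumr.
Qed.

Lemma exchange_esum {T1 T2 : choiceType} (a : T1 -> T2 -> \bar R) :
  (forall i j, 0 <= a i j) ->
  \esum_(i in [set: T1]) \esum_(j in [set: T2]) a i j =
  \esum_(j in [set: T2]) \esum_(i in [set: T1]) a i j.
Proof.
move=> a_ge0; rewrite !esum_esum//.
rewrite (reindex_esum ([set: T2] `*`` (fun=> [set: T1]))
  ([set: T1] `*`` (fun=> [set: T2])) (fun k => (k.2, k.1)))//.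
split; first by move=> [].
- by move=> [x y] [x' y'] _ _ /= [-> ->].
- by move=> [x y] _; exists (y, x).
Qed.

Lemma mul_esum {T1 T2 : choiceType} (f : T1 -> R) (g : T2 -> R) :
  (forall i, 0 <= f i)%R -> (forall j, 0 <= g j)%R ->
  \esum_(j in [set: T2]) (g j)%:E \is a fin_num ->
  (\esum_(i in [set: T1]) (f i)%:E) * (\esum_(j in [set: T2]) (g j)%:E) =
  \esum_(i in [set: T1]) \esum_(j in [set: T2]) (f i * g j)%:E.
Proof.
move=> f_ge0 g_ge0 g_fin.
have sum_g_ge0 : (0 <= fine (\esum_(j in [set: T2]) (g j)%:E))%R.
  by rewrite fine_ge0// esum_ge0// => j _; rewrite lee_fin.
rewrite -(fineK g_fin) muleC -esumZl//.
by apply: eq_esum => i _; rewrite muleC (fineK g_fin) -esumZl.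
Qed.

Lemma esum_pred1_eq {T : choiceType} (f : T -> R) (x : T) : (0 <= f x)%R ->
  \esum_(i in [set: T]) (f i * (i == x)%:R)%:E = (f x)%:E.
Proof.
move=> fx_ge0; rewrite -(@esum_set1 R T x (fun i => (f i)%:E)) ?lee_fin//.
rewrite [RHS]esum_mkcond; apply: eq_esum => i _.
have [->|neq_ix] := eqVneq i x; first by rewrite mem_set// mulr1.
by rewrite memNset ?mulr0// => /= eq_ix; rewrite eq_ix eqxx in neq_ix.
Qed.

Lemma esumD1 {T : choiceType} (f : T -> R) (x : T) : (forall i, 0 <= f i)%R ->
  \esum_(i in [set: T]) (f i * (i != x)%:R)%:E =
  \esum_(i in [set: T]) (f i)%:E - (f x)%:E.
Proof.
move=> f_ge0.
have -> : \esum_(i in [set: T]) (f i)%:E =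
    \esum_(i in [set: T]) (f i * (i != x)%:R)%:E + (f x)%:E.
  rewrite -(esum_pred1_eq f x)// -esumD; do ?by move=> i _; rewrite lee_fin mulr_ge0.
  apply: eq_esum => i _; rewrite -EFinD -mulrDr.
  by case: eqVneq; rewrite ?addr0 ?add0r ?mulr1.
by rewrite addeK.
Qed.

Lemma esum_tuple_prod {T : choiceType} (g : T -> R) (n : nat) :
  (forall i, 0 <= g i)%R -> \esum_(i in [set: T]) (g i)%:E \is a fin_num ->
  \esum_(s in [set: n.-tuple T]) (\prod_(i <- s) g i)%:E =
  (\esum_(i in [set: T]) (g i)%:E) ^+ n.
Proof.
move=> g_ge0 g_fin; elim: n => [|n IHn].
  rewrite expe0 (_ : [set: 0.-tuple T] = [set [tuple]]); last first.
    by apply/seteqP; split => t //= _; rewrite [t]tuple0.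
  by rewrite esum_set1 ?lee_fin ?big_nil.
rewrite (reindex_esum ([set: T] `*`` (fun=> [set: n.-tuple T])) [set: n.+1.-tuple T]
   (fun k => [tuple of k.1 :: k.2])); last first.
  split=> //; first by move=> [x t] [x' t'] _ _ /(congr1 val) [-> /val_inj ->].
  move=> t _; exists (thead t, behead_tuple t) => //.
  by apply: val_inj; rewrite /= [in RHS](tuple_eta t).
under eq_esum do rewrite big_cons.
rewrite -(@esum_esum _ _ _ _ (fun=> [set: n.-tuple T])
  (fun x (t : n.-tuple T) => (g x * \prod_(i <- t) g i)%:E)); last first.
  by move=> i j _ _; rewrite lee_fin mulr_ge0// prodr_ge0.
rewrite -mul_esum ?IHn ?expeS ?fin_numX// => t.
exact: prodr_ge0.
Qed.

Lemma esum2_mul_add_diag {T : choiceType} (f g : T -> R) :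
  (forall i, 0 <= f i)%R -> (forall i, 0 <= g i)%R ->
  \esum_(i in [set: T]) (f i)%:E \is a fin_num ->
  \esum_(i in [set: T]) \esum_(j in [set: T]) (f i * f j + g i * (j == i)%:R)%:E =
  (\esum_(i in [set: T]) (f i)%:E) * (\esum_(i in [set: T]) (f i)%:E) +
  \esum_(i in [set: T]) (g i)%:E.
Proof.
move=> f_ge0 g_ge0 f_fin.
have row i : \esum_(j in [set: T]) (f i * f j + g i * (j == i)%:R)%:E =
    \esum_(j in [set: T]) (f i * f j)%:E + (g i)%:E.
  under eq_esum do rewrite EFinD.
  rewrite esumD ?(esum_pred1_eq (fun=> g i))// => j _; rewrite lee_fin mulr_ge0//.
rewrite (eq_esum (fun i _ => row i)) esumD ?mul_esum// => i _.
  by rewrite esum_ge0// => j _; rewrite lee_fin mulr_ge0.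
by rewrite lee_fin.
Qed.

End esum_lemmas.

Section distribution.
Context {R : realType} {p : nat -> R}.
Hypotheses (p_ge0 : forall x, 0 <= p x)
  (p_sum1 : (\esum_(x in [set: nat]) (p x)%:E = 1)%E).

Lemma distr_le1 x : p x <= 1.
Proof.
rewrite -subr_ge0 -lee_fin EFinB -p_sum1 -esumD1// esum_ge0// => i _.
by rewrite lee_fin mulr_ge0.
Qed.

Lemma esum_avoid2 x y :
  (\esum_(i in [set: nat]) (p i * (i != x)%:R * (i != y)%:R)%:E =
   (1 - p x - p y * (y != x)%:R)%:E)%E.
Proof.
rewrite (esumD1 (fun i => p i * (i != x)%:R)) ?esumD1 ?p_sum1 -?EFinB// => i.
exact: mulr_ge0.
Qed.

Lemma esum_le_scaled_distr (f : nat -> R) (K : R) : 0 <= K ->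
  (forall x, f x <= K * p x) -> (\esum_(x in [set: nat]) (f x)%:E <= K%:E)%E.
Proof.
move=> K_ge0 f_le; rewrite -[K%:E]mule1 -p_sum1 -esumZl//.
by apply: le_esum => x _; rewrite lee_fin f_le.
Qed.

Lemma esum_dominated_fin (f : nat -> R) : (forall x, 0 <= f x <= p x) ->
  \esum_(x in [set: nat]) (f x)%:E \is a fin_num.
Proof.
move=> f_bnd; rewrite ge0_fin_numE; last first.
  by rewrite esum_ge0// => x _; rewrite lee_fin; case/andP: (f_bnd x).
apply: le_lt_trans (ltry 1); apply: esum_le_scaled_distr => // x.
by rewrite mul1r; case/andP: (f_bnd x).
Qed.

Lemma seq_prob_avoid2 n (s : n.-tuple nat) x y :
  seq_prob p s * (occ s x == 0)%:R * (occ s y == 0)%:R =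
  \prod_(i <- s) (p i * (i != x)%:R * (i != y)%:R).
Proof. by rewrite !big_split !prod_neq_count_mem. Qed.

Lemma prob_avoid2 n x y :
  (\esum_(s in [set: n.-tuple nat])
     (seq_prob p s * (occ s x == 0)%:R * (occ s y == 0)%:R)%:E =
   ((1 - p x - p y * (y != x)%:R) ^+ n)%:E)%E.
Proof.
under eq_esum do rewrite seq_prob_avoid2.
rewrite esum_tuple_prod ?esum_avoid2 ?EFin_expe// => i.
by rewrite !mulr_ge0.
Qed.

Lemma avoid2_ge0 x y : 0 <= 1 - p x - p y * (y != x)%:R.
Proof.
rewrite -lee_fin -esum_avoid2 esum_ge0// => i _.
by rewrite lee_fin !mulr_ge0.
Qed.

End distribution.

Section second_moment.
Context {R : realType} (alpha : R) (p : nat -> R).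
Hypotheses (alpha_gt1 : 1 < alpha) (p_ge0 : forall x, 0 <= p x)
  (p_sum1 : (\esum_(x in [set: nat]) (p x)%:E = 1)%E).

Local Notation a x := (p x `^ alpha).
Local Notation unseen s x := ((occ s x == 0)%:R : R).

Definition missing_term (k n x : nat) : R := a x ^+ k * (1 - p x) ^+ n.

Let p_le1 x : p x <= 1. Proof. exact: distr_le1. Qed.

Lemma missing_term_ge0 k n x : 0 <= missing_term k n x.
Proof. by rewrite mulr_ge0 ?exprn_ge0 ?powR_ge0 ?subr_ge0. Qed.

Let a_le x : a x <= p x.
Proof. by rewrite powR_le_self// ltW. Qed.

Lemma M0_fin n (s : n.-tuple nat) : M0 alpha p s \is a fin_num.
Proof.
apply: (esum_dominated_fin p_ge0 p_sum1) => x; rewrite mulr_ge0 ?powR_ge0//=.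
by apply: le_trans (a_le x); rewrite ler_piMr ?powR_ge0 ?lern1 ?leq_b1.
Qed.

Lemma M0_sqr n (s : n.-tuple nat) : (M0 alpha p s * M0 alpha p s =
  \esum_(x in [set: nat]) \esum_(y in [set: nat])
    (a x * a y * (unseen s x * unseen s y))%:E)%E.
Proof.
rewrite /M0 mul_esum; try by [exact: M0_fin | move=> x; rewrite mulr_ge0 ?powR_ge0].
by apply: eq_esum => x _; apply: eq_esum => y _; congr (_%:E); ring.
Qed.

Lemma EM0sq_pairs n : EM0sq alpha p n =
  (\esum_(x in [set: nat]) \esum_(y in [set: nat])
    (a x * a y * (1 - p x - p y * (y != x)%:R) ^+ n)%:E)%E.
Proof.
have P_ge0 (s : n.-tuple nat) : 0 <= seq_prob p s by rewrite prodr_ge0.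
have term_ge0 (s : n.-tuple nat) x y :
    (0 <= (a x * a y * (seq_prob p s * unseen s x * unseen s y))%:E)%E.
  by rewrite lee_fin !mulr_ge0 ?powR_ge0.
transitivity (\esum_(s in [set: n.-tuple nat]) \esum_(x in [set: nat])
  \esum_(y in [set: nat]) (a x * a y * (seq_prob p s * unseen s x * unseen s y))%:E)%E.
  apply: eq_esum => s _; rewrite M0_sqr -esumZl ?P_ge0// => [|x]; last first.
    by rewrite esum_ge0// => y _; rewrite lee_fin !mulr_ge0 ?powR_ge0.
  apply: eq_esum => x _; rewrite -esumZl ?P_ge0// => [|y]; last first.
    by rewrite lee_fin !mulr_ge0 ?powR_ge0.
  by apply: eq_esum => y _; rewrite -EFinM; congr (_%:E); ring.
rewrite exchange_esum => [|s x]; last by rewrite esum_ge0.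
apply: eq_esum => x _; rewrite exchange_esum//.
apply: eq_esum => y _; under eq_esum do rewrite EFinM.
rewrite esumZl ?prob_avoid2 -?EFinM ?mulr_ge0 ?powR_ge0// => s.
by rewrite lee_fin !mulr_ge0 ?P_ge0.
Qed.

Lemma pair_term_le n x y :
  a x * a y * (1 - p x - p y * (y != x)%:R) ^+ n <=
  missing_term 1 n x * missing_term 1 n y + missing_term 2 n x * (y == x)%:R.
Proof.
have := avoid2_ge0 p_ge0 p_sum1 x y; have [->|_] := eqVneq y x.
  rewrite /= mulr0 subr0 mulr1 => _.
  by rewrite ler_wpDl// mulr_ge0 ?missing_term_ge0.
rewrite mulr1 mulr0 addr0 => avoid_ge0.
rewrite /missing_term !expr1 mulrACA ler_wpM2l ?mulr_ge0 ?powR_ge0// -exprMn.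
rewrite lerXn2r ?nnegrE ?mulr_ge0 ?subr_ge0//;
  by have := mulr_ge0 (p_ge0 x) (p_ge0 y); lra.
Qed.

Lemma EM0sq_le_missing_terms n :
  (EM0sq alpha p n <=
   (\esum_(x in [set: nat]) (missing_term 1 n x)%:E) *
   (\esum_(x in [set: nat]) (missing_term 1 n x)%:E) +
   \esum_(x in [set: nat]) (missing_term 2 n x)%:E)%E.
Proof.
rewrite EM0sq_pairs -esum2_mul_add_diag//; try exact: missing_term_ge0.
- by apply: le_esum => x _; apply: le_esum => y _; rewrite lee_fin pair_term_le.
- apply: (esum_dominated_fin p_ge0 p_sum1) => x; rewrite missing_term_ge0 /= /missing_term expr1.
  apply: le_trans (a_le x); rewrite ler_piMr ?powR_ge0//.
  by rewrite exprn_ile1 ?subr_ge0 ?lerBlDr ?lerDl.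
Qed.

Lemma esum_missing_term_le k n : (0 < k)%N -> (0 < n)%N ->
  (\esum_(x in [set: nat]) (missing_term k n x)%:E <=
   ((k%:R * (alpha - 1)) `^ (k%:R * (alpha - 1)) /
     n%:R `^ (k%:R * (alpha - 1)))%:E)%E.
Proof.
move=> k_gt0 n_gt0; apply: esum_le_scaled_distr => // [|x].
  by rewrite divr_ge0 ?powR_ge0.
by rewrite mulrC expr_powR_mul_expr_subr_le.
Qed.

Lemma EM0sq_le n : (0 < n)%N ->
  (EM0sq alpha p n <= ((((alpha - 1) `^ (alpha - 1)) ^+ 2 +
     (2 * (alpha - 1)) `^ (2 * (alpha - 1))) / n%:R `^ (2 * (alpha - 1)))%:E)%E.
Proof.
move=> n_gt0; apply: le_trans (EM0sq_le_missing_terms n) _.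
have n_pow2 : n%:R `^ (2 * (alpha - 1)) = (n%:R `^ (alpha - 1)) ^+ 2.
  by rewrite mulrC powRrM powR_mulrn ?powR_ge0.
have sum1_le := @esum_missing_term_le 1 n isT n_gt0; rewrite mulr1n mul1r in sum1_le.
have sum1_ge0 : (0 <= \esum_(x in [set: nat]) (missing_term 1 n x)%:E)%E.
  by rewrite esum_ge0// => x _; rewrite lee_fin missing_term_ge0.
rewrite mulrDl EFinD leeD ?esum_missing_term_le//.
by rewrite n_pow2 -expr_div_n expr2 EFinM lee_pmul.
Qed.

End second_moment.

Theorem lemma3 (R : realType) (alpha : R)
  (halpha1 : 1 < alpha) (halphaN : forall k : nat, alpha != k%:R) :
  exists C : R, 0 < C /\ exists N : nat, forall n : nat, (N <= n)%N ->
    forall p : nat -> R, is_distr p ->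
      (EM0sq alpha p n <= (C / (n%:R `^ (2 * (alpha - 1))))%:E)%E.
Proof.
exists (((alpha - 1) `^ (alpha - 1)) ^+ 2 + (2 * (alpha - 1)) `^ (2 * (alpha - 1))).
split; first by rewrite ltr_wpDl ?exprn_ge0 ?powR_ge0// powR_gt0// mulr_gt0// subr_gt0.
exists 1%N => n n_gt0 p [p_ge0 p_sum1].
exact: EM0sq_le.
Qed.
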